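(* Let $G_{\mathrm{AndI}}$ be the $q$-grammar with master variables $\{x,y\}$, rule $x_j\mapsto q^jx_jy_{j+1}$, $y_j\mapsto q^jx_j$, and order AIO, with $q$-derivative $D$, and let $n\ge1$. Every term of $D^n(x_0)$ has the form $w=x_0\prod_{i\in\mathcal{I}}v_i$ (product in increasing order of $i$) for some $\mathcal{I}\subseteq\{1,\dots,n\}$ and $v_i\in\{x_i,y_i\}$. To such a word associate the step sequence $S=(s_1,\dots,s_n)$ with $s_i=U=(1,1)$ if $i\in\mathcal{I}$ and $v_i=x_i$, $s_i=L=(1,0)$ if $i\in\mathcal{I}$ and $v_i=y_i$, and $s_i=D^*=(1,-1)$ if $i\notin\mathcal{I}$. Then a word $w$ of this form is a term of $D^n(x_0)$ if and only if $S$ is a Motzkin path of length $n$ (a lattice path starting at height $0$ that never goes below height $0$ and ends at height $0$). Consequently the number of terms of $D^n(x_0)$ equals the $n$-th Motzkin number $M_n$.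
   Context: $\mathbb{K}$ is a commutative ring with unity and characteristic zero, $q$ an indeterminate. For a set $S$ of master variables, $\mathbb{S}=\{s_i:s\in S,\ i\ge0\}$ is a set of non-commuting variables, $F(\mathbb{S})$ the free group on $\mathbb{S}$, $\mathbb{E}=\mathbb{K}[q][F(\mathbb{S})]$ its group algebra. A rule $R$ assigns to each $s_i$ an element of $\mathbb{E}$, extended by $R(s_i^{-1})=-s_i^{-1}R(s_i)s_{i+1}^{-1}$. The up-arrow $\uparrow$ is the linear map replacing each letter $s_i^{\pm1}$ by $s_{i+1}^{\pm1}$. AIO stably reorders the letters of a word according to the position of their underlying variable in $x_0,y_0,x_1,y_1,\dots$. The $q$-derivative of a $q$-grammar $(S,R,\rho)$ is the $\mathbb{K}[q]$-linear map with $D(w_1\cdots w_n)=\sum_{j=1}^n\rho\big(w_1\cdots w_{j-1}R(w_j)\uparrow(w_{j+1}\cdots w_n)\big)$, $D^0=\mathrm{id}$, $D^k=D\circ D^{k-1}$. Writing an element of $\mathbb{E}$ as $\sum_{w\in F(\mathbb{S})}a_ww$, its terms are the words $w$ with $a_w\ne0$. *)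

From HB Require Import structures.
From mathcomp Require Import all_boot all_order all_algebra.
Set Implicit Arguments. Unset Strict Implicit. Unset Printing Implicit Defensive.
Import Order.TTheory GRing.Theory Num.Theory.
Local Open Scope ring_scope.

(* Master variables {x, y} encoded by bool: false = x, true = y.             *)
(* A variable s_i of S is a pair (s, i).                                     *)
Definition letter := (bool * nat)%type.
(* A signed letter (s_i, e): e = false means s_i, e = true means s_i^{-1}.  *)
Definition sletter := (letter * bool)%type.
(* Words over signed letters; elements of F(S) are the reduced words.       *)
Definition word := seq sletter.

Definition sinv (a : sletter) : sletter := (a.1, ~~ a.2).

Fixpoint reduce (w : word) : word :=
  match w with
  | [::] => [::]
  | a :: s =>
      let t := reduce s in
      match t with
      | b :: t' => if b == sinv a then t' else a :: t
      | [::] => [:: a]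
      end
  end.

(* An element is represented by a finite formal sum  sum_k c_k w_k,         *)
(* given as a list of (coefficient, word) pairs; q is the variable 'X.      *)
Definition elt (K : comNzRingType) := seq ({poly K} * word)%type.

Section GroupAlgebra.
Variable K : comNzRingType.

Definition coeffE (A : elt K) (w : word) : {poly K} :=
  \sum_(p <- A | reduce p.2 == w) p.1.

Definition is_term (A : elt K) (w : word) : Prop := coeffE A w != 0.

Definition terms (A : elt K) : seq word :=
  [seq w <- undup [seq reduce p.2 | p <- A] | coeffE A w != 0].
Definition num_terms (A : elt K) : nat := size (terms A).

Definition monoE (w : word) : elt K := [:: (1, w)].
Definition mulE (A B : elt K) : elt K :=
  [seq (p.1 * r.1, reduce (p.2 ++ r.2)) | p <- A, r <- B].
Definition scaleE (c : {poly K}) (A : elt K) : elt K :=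
  [seq (c * p.1, p.2) | p <- A].

Definition shiftl (s : letter) : letter := (s.1, s.2.+1).
Definition up (w : word) : word := [seq (shiftl a.1, a.2) | a <- w].

Definition rhoE (rho : word -> word) (A : elt K) : elt K :=
  [seq (p.1, reduce (rho (reduce p.2))) | p <- A].

Definition ruleext (R : letter -> elt K) (a : sletter) : elt K :=
  if a.2 then
    scaleE (-1) (mulE (mulE (monoE [:: (a.1, true)]) (R a.1))
                      (monoE [:: (shiftl a.1, true)]))
  else R a.1.

Definition dflt_sletter : sletter := ((false, 0%N), false).

(* D(w_1 ... w_n) = sum_j rho(w_1...w_{j-1} R(w_j) up(w_{j+1}...w_n)) *)
Definition Dword (R : letter -> elt K) (rho : word -> word) (w : word) : elt K :=
  flatten [seq rhoE rho (mulE (mulE (monoE (take j w))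
                                     (ruleext R (nth dflt_sletter w j)))
                               (monoE (up (drop j.+1 w)))) | j <- iota 0 (size w)].

Definition qderiv (R : letter -> elt K) (rho : word -> word) (A : elt K) : elt K :=
  flatten [seq scaleE p.1 (Dword R rho (reduce p.2)) | p <- A].

Definition rule_AndI (s : letter) : elt K :=
  if s.1 then [:: ('X^(s.2), [:: ((false, s.2), false)])]
  else [:: ('X^(s.2), [:: ((false, s.2), false); ((true, s.2.+1), false)])].

(* AIO: stable sort by position of the underlying variable in
   x_0, y_0, x_1, y_1, ...  (x_i at 2i, y_i at 2i+1) *)
Definition aio_key (a : sletter) : nat := ((a.1.2).*2 + a.1.1)%N.
Definition aio (w : word) : word := sort (fun a b => aio_key a <= aio_key b)%N w.

Definition x0 : word := [:: ((false, 0%N), false)].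

Definition DnAndI (n : nat) : elt K := iter n (qderiv rule_AndI aio) (monoE x0).

End GroupAlgebra.

(* f i (for i : 'I_n, standing for index i+1 in {1..n}):
   None       <-> i+1 not in I,
   Some false <-> i+1 in I and v_{i+1} = x_{i+1},
   Some true  <-> i+1 in I and v_{i+1} = y_{i+1}.                          *)
Definition word_of (n : nat) (f : {ffun 'I_n -> option bool}) : word :=
  ((false, 0%N), false) ::
  flatten [seq (if f i is Some b then [:: ((b, (val i).+1), false)] else [::])
          | i <- enum 'I_n].

Definition step (o : option bool) : int :=
  match o with Some false => 1 | Some true => 0 | None => -1 end.

Definition steps (n : nat) (f : {ffun 'I_n -> option bool}) : seq int :=
  [seq step (f i) | i <- enum 'I_n].

Definition is_motzkin (s : seq int) : bool :=
  all (fun k => 0 <= \sum_(e <- take k s) e) (iota 0 (size s).+1)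
  && (\sum_(e <- s) e == 0).

Definition motzkin_number (n : nat) : nat :=
  #|[set f : {ffun 'I_n -> option bool} | is_motzkin (steps f)]|.

From HB Require Import structures.
From mathcomp Require Import all_boot all_order all_algebra.
From mathcomp Require Import zify.
Import Order.TTheory GRing.Theory.
Set Implicit Arguments. Unset Strict Implicit.
Local Open Scope ring_scope.

(* No cancellation ever happens.  Every word that occurs is a positive
   word x_0 v_{i_1} ... v_{i_k} already in AIO order, coded by a sequence g of
   [option bool]; the derivative of such a word is a list of monomials q^i
   times the words coded by the "children" of g, which are obtained by the
   local replacements U -> U L, L -> U D*, plus L in front for x_0.  These
   children preserve Motzkin paths, and every nonempty Motzkin path is a
   child of a Motzkin path one step shorter.  So the words of D^n(x_0) are
   exactly those coded by the Motzkin paths of length n, each with a nonempty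
   sum of powers of q as coefficient, which is nonzero in characteristic 0. *)

(** * Step sequences and Motzkin paths *)

Fixpoint motzkin_from (h : int) (s : seq int) : bool :=
  if s is e :: s' then (0 <= h + e) && motzkin_from (h + e) s' else h == 0.

Lemma motzkin_fromE (h : int) (s : seq int) :
  (all (fun k => 0 <= h + \sum_(e <- take k s) e) (iota 0 (size s).+1)
   && (h + \sum_(e <- s) e == 0)) = (0 <= h) && motzkin_from h s.
Proof.
elim: s h => [|e s IH] h.
  by rewrite /= !big_nil addr0 andbT; case: eqP => [->|].
rewrite -[iota 0 _]/([:: 0%N] ++ iota (1 + 0) (size s).+1) iotaDl.
rewrite all_cat all_seq1 all_map take0 big_nil addr0 big_cons addrA -andbA.
rewrite [motzkin_from _ _]/= -IH; congr [&& _, _ & _]; apply: eq_all => k /=.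
by rewrite big_cons addrA.
Qed.

Lemma is_motzkinE (s : seq int) : is_motzkin s = motzkin_from 0 s.
Proof.
rewrite -[RHS]/((0 <= 0 :> int) && _) -motzkin_fromE /is_motzkin add0r.
by under [in RHS]eq_all => k do rewrite add0r.
Qed.

Definition motzkin_seq (g : seq (option bool)) := motzkin_from 0 (map step g).

(* [children g] codes the words of D(x_0 v_1 ... ), one per letter derived:
   x_0 -> x_0 y_1 puts an L in front, x_k -> x_k y_{k+1} turns U into U L,
   y_k -> x_k turns L into U D*, and every later letter is shifted by one. *)
Fixpoint children_tail (g : seq (option bool)) : seq (seq (option bool)) :=
  match g with
  | [::] => [::]
  | None :: g' => [seq None :: h | h <- children_tail g']
  | Some false :: g' =>
      (Some false :: Some true :: g') :: [seq Some false :: h | h <- children_tail g']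
  | Some true :: g' =>
      (Some false :: None :: g') :: [seq Some true :: h | h <- children_tail g']
  end.

Definition children (g : seq (option bool)) := (Some true :: g) :: children_tail g.

Lemma size_children_tail g g' : g' \in children_tail g -> size g' = (size g).+1.
Proof.
elim: g g' => [|[[]|] g IH] g' //=; rewrite ?inE.
- by case/orP => [/eqP -> //| /mapP [h /IH Hh ->]]; rewrite /= Hh.
- by case/orP => [/eqP -> //| /mapP [h /IH Hh ->]]; rewrite /= Hh.
- by case/mapP => h /IH Hh ->; rewrite /= Hh.
Qed.

Lemma size_children g g' : g' \in children g -> size g' = (size g).+1.
Proof. by rewrite inE => /orP [/eqP -> //|/size_children_tail]. Qed.

Lemma motzkin_children_tail h g g' :
  motzkin_from h (map step g) -> g' \in children_tail g ->
  motzkin_from h (map step g').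
Proof.
elim: g h g' => [|[[]|] g IH] h g' //= /andP [Hh Hg]; rewrite ?inE.
- case/orP => [/eqP -> | /mapP [u Hu ->]] /=; last by rewrite Hh (IH _ _ Hg Hu).
  by rewrite addr0 in Hh Hg; rewrite addrK Hh Hg andbT; lia.
- case/orP => [/eqP -> | /mapP [u Hu ->]] /=; last by rewrite Hh (IH _ _ Hg Hu).
  by rewrite addr0 Hh Hg.
- by case/mapP => u Hu -> /=; rewrite Hh (IH _ _ Hg Hu).
Qed.

Lemma motzkin_children g g' : motzkin_seq g -> g' \in children g -> motzkin_seq g'.
Proof.
rewrite /motzkin_seq inE => Hg /orP [/eqP -> | ]; last exact: motzkin_children_tail.
by rewrite /= addr0 Hg.
Qed.

(* The parent undoes the replacement just after the leading run of U's:
   U L comes from U, and U D* from L. *)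
Lemma children_tail_parent h r : 0 <= h ->
  motzkin_from h (map step (Some false :: r)) ->
  exists g, [/\ motzkin_from h (map step g), size g = size r
              & Some false :: r \in children_tail g].
Proof.
elim: r h => [|[[]|] r IH] h Hh /= /andP [Hh1].
- by move/eqP; lia.
- case/andP=> Hh2 Hr; exists (Some false :: r).
  by rewrite /= inE eqxx Hh1; rewrite addr0 in Hr.
- case/andP=> Hh2 Hr.
  have [g [Hg Hsize Hch]] := IH (h + 1) Hh1 (introT andP (conj Hh2 Hr)).
  exists (Some false :: g); rewrite /= Hh1 Hg Hsize inE.
  by split=> //; apply/orP; right; apply: map_f.
- case/andP=> _ Hr; exists (Some true :: r).
  by rewrite /= inE eqxx addr0 Hh; rewrite addrK in Hr.
Qed.

Lemma children_parent g' : motzkin_seq g' -> g' != [::] ->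
  exists g, [/\ motzkin_seq g, (size g).+1 = size g' & g' \in children g].
Proof.
case: g' => [|[[]|] r] // Hr _.
- by exists r; rewrite inE eqxx.
- have [g [Hg Hsize Hch]] := children_tail_parent (lexx 0) Hr.
  by exists g; rewrite inE Hch orbT Hsize.
Qed.

(** * Coding positive words by step sequences *)

Fixpoint letters_from (k : nat) (g : seq (option bool)) : word :=
  match g with
  | [::] => [::]
  | Some b :: g' => ((b, k), false) :: letters_from k.+1 g'
  | None :: g' => letters_from k.+1 g'
  end.

Definition word_of_seq g : word := x0 ++ letters_from 1 g.

Lemma letters_from_ge k g : all (fun a : sletter => (k <= a.1.2)%N) (letters_from k g).
Proof.
elim: g k => [|[b|] g IH] k //=; last by apply: sub_all (IH k.+1) => a /=; lia.
by rewrite leqnn; apply: sub_all (IH k.+1) => a /=; lia.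
Qed.

Lemma letters_from_inj k g g' :
  size g = size g' -> letters_from k g = letters_from k g' -> g = g'.
Proof.
elim: g k g' => [|o g IH] k [|o' g'] //= [Hs].
case: o => [b|]; case: o' => [b'|] //=.
- by case=> -> /IH ->.
- by move=> E; have := letters_from_ge k.+1 g'; rewrite -E /=; lia.
- by move=> E; have := letters_from_ge k.+1 g; rewrite E /=; lia.
- by move/IH ->.
Qed.

Lemma word_of_seq_inj g g' :
  size g = size g' -> word_of_seq g = word_of_seq g' -> g = g'.
Proof. by move=> Hs [] /letters_from_inj; apply. Qed.

Definition positive_word (w : word) := all (fun a : sletter => ~~ a.2) w.

Lemma reduce_positive w : positive_word w -> reduce w = w.
Proof.
elim: w => [|a w IH] //= /andP [Ha Hw]; rewrite IH //.
case: w Hw {IH} => [|b t] //= /andP [Hb _].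
by case: eqP => // /(congr1 snd) /=; move: Ha Hb; case: (a.2); case: (b.2).
Qed.

Lemma positive_word_of_seq g : positive_word (word_of_seq g).
Proof. by rewrite /positive_word /=; elim: g 1%N => [|[[]|] g IH] k /=. Qed.

Lemma reduce_word_of_seq g : reduce (word_of_seq g) = word_of_seq g.
Proof. exact/reduce_positive/positive_word_of_seq. Qed.

Lemma aio_word_of_seq g : aio (word_of_seq g) = word_of_seq g.
Proof.
apply: sorted_sort; first by move=> a b c; apply: leq_trans.
rewrite /word_of_seq /=; have : (aio_key ((false, 0%N), false) <= 1.*2)%N by [].
elim: g 1%N ((false, 0%N), false) => [|[b|] g IH] k a //= Ha.
  by rewrite IH /aio_key /= ?andbT; case: b Ha; rewrite /aio_key /=; lia.
by apply: IH; lia.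
Qed.

Lemma word_of_codom n (f : {ffun 'I_n -> option bool}) :
  word_of f = word_of_seq (codom f).
Proof.
have letters_zip k g : letters_from k g = flatten
    [seq if o.2 is Some b then [:: ((b, o.1), false)] else [::]
    | o <- zip (iota k (size g)) g].
  by elim: g k => [|[b|] g IH] k //=; rewrite IH.
rewrite /word_of /word_of_seq letters_zip size_codom card_ord codomE.
rewrite -[iota 1 n]/(iota (1 + 0) n) iotaDl -val_enum_ord -map_comp zip_map.
by rewrite -map_comp.
Qed.

Lemma codom_ffun_inj (aT : finType) (rT : Type) :
  injective (fun f : {ffun aT -> rT} => codom f).
Proof.
by move=> f1 f2 /=; rewrite !codom_ffun => /val_inj E; rewrite -[f1]fgraphK E fgraphK.
Qed.

Lemma codom_ffun_surj (T : Type) n (g : seq T) :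
  size g = n -> exists f : {ffun 'I_n -> T}, codom f = g.
Proof.
move=> <-; exists (Finfun (tcast (esym (card_ord _)) (in_tuple g))).
by rewrite codom_ffun FinfunK val_tcast.
Qed.

Lemma steps_codom n (f : {ffun 'I_n -> option bool}) : steps f = map step (codom f).
Proof. by rewrite codomE -map_comp. Qed.

Lemma word_of_inj n : injective (@word_of n).
Proof.
move=> f1 f2; rewrite !word_of_codom => /word_of_seq_inj E.
by apply: codom_ffun_inj; apply: E; rewrite !size_codom.
Qed.

(** * The derivative of a coded word *)

Definition rule_word (a : sletter) : word :=
  if a.1.1 then [:: ((false, a.1.2), false)]
  else [:: ((false, a.1.2), false); ((true, a.1.2.+1), false)].

Fixpoint derived_words (w : word) : seq word :=
  if w is a :: w' then (rule_word a ++ up w') :: [seq a :: u | u <- derived_words w']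
  else [::].

Lemma derived_wordsE w :
  [seq take j w ++ rule_word (nth dflt_sletter w j) ++ up (drop j.+1 w)
  | j <- iota 0 (size w)] = derived_words w.
Proof.
elim: w => [|a w IH] //=; rewrite drop0 -IH -[iota 1 _]/(iota (1 + 0) _) iotaDl -map_comp.
by rewrite -map_comp.
Qed.

Lemma up_letters_from k g : up (letters_from k g) = letters_from k.+1 g.
Proof. by elim: g k => [|[[]|] g IH] k //=; rewrite IH. Qed.

Lemma derived_letters_from k g :
  derived_words (letters_from k g) = map (letters_from k) (children_tail g).
Proof.
by elim: g k => [|[[]|] g IH] k //=; rewrite ?up_letters_from IH -!map_comp.
Qed.

Lemma derived_word_of_seq g :
  derived_words (word_of_seq g) = map word_of_seq (children g).
Proof. by rewrite /= up_letters_from derived_letters_from -map_comp. Qed.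

Section Derivative.
Variable K : comNzRingType.

Lemma ruleext_AndI (a : sletter) : ~~ a.2 ->
  ruleext (rule_AndI K) a = [:: ('X^(a.1.2), rule_word a)].
Proof. by case: a => [[[] i] []]. Qed.

Lemma Dword_positive w : positive_word w ->
  Dword (rule_AndI K) aio w =
  [seq ('X^((nth dflt_sletter w j).1.2),
        aio (take j w ++ rule_word (nth dflt_sletter w j) ++ up (drop j.+1 w)))
  | j <- iota 0 (size w)].
Proof.
move=> Hw; rewrite /Dword -[RHS]flatten_seq1 -map_comp; congr flatten.
apply/eq_in_map => j; rewrite mem_iota add0n => /andP [_ Hj] /=.
set a := nth dflt_sletter w j.
have positive_cat u v : positive_word (u ++ v) = positive_word u && positive_word v.
  exact: all_cat.
have Ha : ~~ a.2 by exact/(allP Hw)/mem_nth.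
have Hta : positive_word (take j w ++ rule_word a).
  rewrite positive_cat; apply/andP; split; last by rewrite /rule_word; case: ifP.
  by apply/allP => x /mem_take /(allP Hw).
have Htau : positive_word ((take j w ++ rule_word a) ++ up (drop j.+1 w)).
  rewrite positive_cat Hta /positive_word /up all_map.
  by apply/allP => x /mem_drop /(allP Hw).
rewrite ruleext_AndI // /mulE /monoE /rhoE /= mul1r mulr1.
rewrite (reduce_positive Hta) !(reduce_positive Htau) reduce_positive ?catA //.
by rewrite /positive_word all_sort.
Qed.

Lemma Dword_word_of_seq g :
  map snd (Dword (rule_AndI K) aio (word_of_seq g)) = map word_of_seq (children g).
Proof.
rewrite Dword_positive ?positive_word_of_seq // -map_comp.
transitivity (map aio (derived_words (word_of_seq g))).
  by rewrite -derived_wordsE -map_comp.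
by rewrite derived_word_of_seq -map_comp; apply: eq_map => g'; exact: aio_word_of_seq.
Qed.

Lemma Dword_monomial w d : positive_word w ->
  d \in Dword (rule_AndI K) aio w -> exists i, d.1 = 'X^i.
Proof. by move=> Hw; rewrite Dword_positive // => /mapP [j _ ->]; eexists. Qed.

Lemma mem_qderiv R rho (A : elt K) r :
  r \in qderiv R rho A <->
  exists2 p, p \in A & exists2 d, d \in Dword R rho (reduce p.2) & r = (p.1 * d.1, d.2).
Proof.
split; first by case/flattenP => _ /mapP [p Hp ->] /mapP [d Hd ->]; exists p => //; exists d.
case=> p Hp [d Hd ->]; apply/flattenP.
by exists (scaleE p.1 (Dword R rho (reduce p.2))); apply: map_f.
Qed.

(** * Coefficients *)

Definition monomial_sum (c : {poly K}) :=
  exists2 s : seq nat, s != [::] & c = \sum_(k <- s) 'X^k.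

Lemma monomial_sumMXn c i : monomial_sum c -> monomial_sum (c * 'X^i).
Proof.
case=> s Hs ->; exists [seq (k + i)%N | k <- s]; first by case: s Hs.
by rewrite big_map mulr_suml; apply: eq_bigr => k _; rewrite exprD.
Qed.

Lemma monomial_sum_neq0 c :
  (forall m : nat, (m%:R : K) = 0 -> m = 0%N) -> monomial_sum c -> c != 0.
Proof.
move=> charK0 [[|a s] // _ ->]; apply/eqP => /(congr1 (fun p : {poly K} => p`_a)).
have coef_sum t : (\sum_(k <- t) ('X^k : {poly K}))`_a = (count (pred1 a) t)%:R.
  by elim: t => [|b t IH]; rewrite ?big_nil ?coef0 // big_cons coefD IH coefXn natrD eq_sym.
by rewrite coef_sum coef0 /= eqxx => /charK0.
Qed.

Lemma coeffE_monomial_sum (A : elt K) w :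
  (forall p, p \in A -> monomial_sum p.1) -> has (fun p => reduce p.2 == w) A ->
  monomial_sum (coeffE A w).
Proof.
rewrite /coeffE; elim: A => [|a A IH] //= HA; rewrite big_cons.
have HA' p : p \in A -> monomial_sum p.1 by move=> Hp; apply: HA; rewrite inE Hp orbT.
case: ifP => [_ _ | _ /(IH HA') //].
have [s Hs ->] : monomial_sum a.1 by apply: HA; rewrite inE eqxx.
have [/(IH HA') [t _ ->] | Hnone] := boolP (has (fun p => reduce p.2 == w) A).
  by exists (s ++ t); [case: s Hs | rewrite big_cat].
by rewrite big_hasC // addr0; exists s.
Qed.

Lemma coeffE_neq0_has (A : elt K) w :
  coeffE A w != 0 -> has (fun p => reduce p.2 == w) A.
Proof. by apply: contraNT => Hnone; rewrite /coeffE big_hasC. Qed.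

Lemma mem_terms (A : elt K) w : (w \in terms A) = (coeffE A w != 0).
Proof.
rewrite mem_filter mem_undup; apply: andb_idr => /coeffE_neq0_has /hasP [p Hp /eqP <-].
exact: map_f.
Qed.

(** * The terms of D^n(x_0) *)

Definition motzkin_supported m (A : elt K) := forall p, p \in A ->
  monomial_sum p.1 /\ exists g, [/\ size g = m, motzkin_seq g & p.2 = word_of_seq g].

Definition motzkin_covering m (A : elt K) := forall g, size g = m -> motzkin_seq g ->
  exists2 p, p \in A & p.2 = word_of_seq g.

Lemma qderiv_supported m A : motzkin_supported m A ->
  motzkin_supported m.+1 (qderiv (rule_AndI K) aio A).
Proof.
move=> HA r /mem_qderiv [p /HA [Hp [g [Hsize Hg ->]]] [d Hd ->]] /=.
rewrite reduce_word_of_seq in Hd.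
have [i ->] := Dword_monomial (positive_word_of_seq g) Hd.
split; first exact: monomial_sumMXn.
have : d.2 \in map snd (Dword (rule_AndI K) aio (word_of_seq g)) by exact: map_f.
rewrite Dword_word_of_seq => /mapP [g' Hg' ->]; exists g'.
by rewrite (size_children Hg') Hsize (motzkin_children Hg Hg').
Qed.

Lemma qderiv_covering m A : motzkin_covering m A ->
  motzkin_covering m.+1 (qderiv (rule_AndI K) aio A).
Proof.
move=> HA g' Hsize Hg'.
have [|g [Hg Hsize' Hch]] := children_parent Hg'; first by rewrite -size_eq0 Hsize.
have [p Hp Ep] := HA g (succn_inj (etrans Hsize' Hsize)) Hg.
have : word_of_seq g' \in map snd (Dword (rule_AndI K) aio (word_of_seq g)).
  by rewrite Dword_word_of_seq map_f.
case/mapP => d Hd Ed; exists (p.1 * d.1, d.2) => //.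
by apply/mem_qderiv; exists p => //; exists d; rewrite // Ep reduce_word_of_seq.
Qed.

Lemma DnAndI_supported m : motzkin_supported m (DnAndI K m).
Proof.
elim: m => [|m IH]; last exact: qderiv_supported.
move=> p; rewrite inE => /eqP -> /=; split; last by exists [::].
by exists [:: 0%N]; rewrite // big_seq1 expr0.
Qed.

Lemma DnAndI_covering m : motzkin_covering m (DnAndI K m).
Proof.
elim: m => [|m IH]; last exact: qderiv_covering.
by case=> // _ _; exists (1, x0); rewrite ?inE.
Qed.

End Derivative.

Section Terms.
Variables (K : comNzRingType) (n : nat).
Hypothesis charK0 : forall m : nat, (m%:R : K) = 0 -> m = 0%N.

Lemma is_term_DnAndI w :
  is_term (DnAndI K n) w <->
  exists g, [/\ size g = n, motzkin_seq g & w = word_of_seq g].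
Proof.
have Hsupp := @DnAndI_supported K n; split.
  case/coeffE_neq0_has/hasP => p /Hsupp [_ [g [Hsize Hg Ep]]] /eqP <-.
  by exists g; rewrite Ep reduce_word_of_seq.
case=> g [Hsize Hg ->]; apply: (monomial_sum_neq0 charK0).
apply: coeffE_monomial_sum => [p /Hsupp [] //|].
have [p Hp Ep] := DnAndI_covering K Hsize Hg.
by apply/hasP; exists p; rewrite // Ep reduce_word_of_seq.
Qed.

Lemma is_term_DnAndI_word_of w :
  is_term (DnAndI K n) w -> exists f : {ffun 'I_n -> option bool}, w = word_of f.
Proof.
case/is_term_DnAndI => g [Hsize _ ->].
by have [f <-] := codom_ffun_surj Hsize; exists f; rewrite word_of_codom.
Qed.

Lemma is_term_DnAndI_motzkin (f : {ffun 'I_n -> option bool}) :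
  is_term (DnAndI K n) (word_of f) <-> is_motzkin (steps f).
Proof.
have Hsize : size (codom f) = n by rewrite size_codom card_ord.
rewrite is_term_DnAndI // word_of_codom steps_codom is_motzkinE; split.
  by case=> g [Hg Hm /word_of_seq_inj E]; rewrite E // Hsize Hg.
by move=> Hm; exists (codom f).
Qed.

End Terms.

Theorem proposition6p9 (K : comNzRingType)
  (charK0 : forall m : nat, (m%:R : K) = 0 -> m = 0%N)
  (n : nat) (hn : (1 <= n)%N) :
  (forall w : word, is_term (DnAndI K n) w ->
     exists f : {ffun 'I_n -> option bool}, w = word_of f)
  /\ (forall f : {ffun 'I_n -> option bool},
        is_term (DnAndI K n) (word_of f) <-> is_motzkin (steps f))
  /\ num_terms (DnAndI K n) = motzkin_number n.
Proof.
have term_word_of := is_term_DnAndI_word_of charK0 (n := n).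
have term_motzkin := is_term_DnAndI_motzkin charK0.
split=> //; split=> //.
rewrite /num_terms /motzkin_number cardE -(size_map (@word_of n)).
apply/perm_size/uniq_perm; first by rewrite filter_uniq ?undup_uniq.
  by rewrite map_inj_uniq ?enum_uniq //; exact: word_of_inj.
move=> w; rewrite mem_terms; apply/idP/mapP => [Hw | [f]].
  have [f Ef] := term_word_of w Hw; exists f => //.
  by rewrite mem_enum inE -term_motzkin -Ef.
by rewrite mem_enum inE -term_motzkin => Hf ->.
Qed.
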